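(* In the multi-agent combinatorial-actions contract model (described in the context) with an XOS reward function $f$ and $n$ agents, for any contract $\boldsymbol{\alpha}^\star$ and any pure Nash equilibrium $S^\star$ of $\boldsymbol{\alpha}^\star$, there exists an equal-pay contract $\boldsymbol{\alpha}$ and a pure Nash equilibrium $S$ of $\boldsymbol{\alpha}$ such that $$\Big(1-\sum_{i\in A}\alpha_i\Big)f(S)\ \ge\ \Omega\!\left(\frac{\log\log n}{\log n}\right)\Big(1-\sum_{i\in A}\alpha^\star_i\Big)f(S^\star).$$
   Context: Model: principal and agents $A=[n]$; each agent $i$ has a finite action set $T_i$ (pairwise disjoint), $T=\bigsqcup_iT_i$, costs $c_j\ge0$, $c(S_i)=\sum_{j\in S_i}c_j$. Reward $f:2^T\to[0,1]$ monotone, $f(\emptyset)=0$; $f$ is XOS if $f(S)=\max_{\ell\in\mathcal{L}}\ell(S)$ for a finite family $\mathcal{L}$ of additive functions. Contract $\boldsymbol{\alpha}\in[0,1]^A$; agent $i$'s utility $\alpha_if(S)-c(S\cap T_i)$; $S$ is a pure Nash equilibrium of $\boldsymbol{\alpha}$ if no agent can gain by changing her own subset of actions. A contract is equal-pay if all its nonzero entries are equal. The $\Omega(\cdot)$ hides a universal constant. *)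

From HB Require Import structures.
From mathcomp Require Import all_boot all_order all_algebra.
From mathcomp Require Import all_classical all_reals.
From mathcomp Require Import exp.
Set Implicit Arguments. Unset Strict Implicit. Unset Printing Implicit Defensive.
Import Order.TTheory GRing.Theory Num.Theory.
Local Open Scope ring_scope.

Section Model.
Variables (R : realType) (n : nat) (T : finType).
(* own j = the agent owning action j; T_i = [set j | own j == i] *)
Variable own : T -> 'I_n.
Variable c : T -> R.
Variable f : {set T} -> R.

Definition actions_of (i : 'I_n) : {set T} := [set j | own j == i].

Definition cost (S : {set T}) : R := \sum_(j in S) c j.

(* XOS: f is the max of a finite, nonempty family of (nonnegative) additive
   functions l(S) = \sum_{j in S} w j. *)
Definition additive_fn (w : T -> R) (S : {set T}) : R := \sum_(j in S) w j.

Definition is_XOS : Prop :=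
  exists L : seq (T -> R),
    [/\ L != [::],
        (forall w, w \in L -> forall j, 0 <= w j),
        (forall w, w \in L -> forall S, additive_fn w S <= f S) &
        (forall S, exists2 w, w \in L & additive_fn w S = f S)].

Definition valid_reward : Prop :=
  [/\ f (finset.set0 : {set T}) = 0,
      (forall S : {set T}, 0 <= f S <= 1),
      (forall S S' : {set T}, S \subset S' -> f S <= f S') & is_XOS].

Definition is_contract (a : 'I_n -> R) : Prop := forall i, 0 <= a i <= 1.

Definition equal_pay (a : 'I_n -> R) : Prop :=
  forall i k, a i != 0 -> a k != 0 -> a i = a k.

Definition agent_util (a : 'I_n -> R) (i : 'I_n) (S : {set T}) : R :=
  a i * f S - cost (S :&: actions_of i).

Definition pure_NE (a : 'I_n -> R) (S : {set T}) : Prop :=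
  forall i (S' : {set T}), S' \subset actions_of i ->
    agent_util a i ((S :\: actions_of i) :|: S') <= agent_util a i S.

Definition principal_util (a : 'I_n -> R) (S : {set T}) : R :=
  (1 - \sum_i a i) * f S.

End Model.

From HB Require Import structures.
From mathcomp Require Import all_boot all_order all_algebra.
From mathcomp Require Import all_classical all_reals.
From mathcomp Require Import exp.
From mathcomp Require Import ring lra.
Import Order.TTheory GRing.Theory Num.Theory.
Import fintype.
Set Implicit Arguments. Unset Strict Implicit. Unset Printing Implicit Defensive.
Local Open Scope ring_scope.

(* Let w be an additive function supporting the XOS reward f at the equilibrium
   S* of a*, and l_i the w-value of agent i's actions in S*; deviating to no
   action shows that agent i's cost in S* is at most a*_i l_i.  If the agents
   paid at most 1/2 carry a quarter of the principal's utility, a scale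
   argument over k = 1, L, ..., L^J >= n finds a group K of at most k of them,
   each paid at most 1/(2k), whose value l(K) is a 1/(J + 2L + 2) fraction of
   theirs; paying 3/(4k) to every member of K, the maximiser of the potential
   b f - c over the actions of K is an equilibrium whose reward is at least
   l(K)/3.  Otherwise a single agent i is paid more than 1/2 and carries most
   of the principal's utility, and paying (1 + a*_i)/2 to i alone works.  With
   L about sqrt (ln n) and J about ln n / ln L, J + 2L + 2 = O(ln n / ln ln n). *)

Lemma exists_subset_card {T : finType} {A : {set T}} {k : nat} :
  (k <= #|A|)%N -> exists2 B : {set T}, B \subset A & #|B| = k.
Proof.
move=> /card_geqP [s [s_uniq s_size sA]].
exists [set x in s]; last by rewrite cardsE (card_uniqP s_uniq).
by apply/subsetP => x; rewrite inE => /sA.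
Qed.

Lemma scale_trichotomy (R : realType) (L J : nat) (t x y : R) :
    (0 < L)%N -> 0 <= x -> 2 * x <= 1 -> 0 <= y ->
  [\/ (L ^ J)%:R * y <= t,
      exists2 s, (s <= J)%N & (2 * (L ^ s)%:R * x <= 1) && (t < (L ^ s)%:R * y)
    | y <= 2 * L%:R * t * x].
Proof.
move=> L_gt0 x_ge0 x_half y_ge0.
have [yJ_le | t_lt] := leP ((L ^ J)%:R * y) t; first by constructor 1.
have [s0 t_lt0 min0] := ex_minnP (ex_intro (fun s => t < (L ^ s)%:R * y) J t_lt).
have [low | high] := boolP (2 * (L ^ s0)%:R * x <= 1).
  by constructor 2; exists s0; rewrite ?min0 // low t_lt0.
constructor 3; case: s0 t_lt0 min0 high => [|s] _ min0 high.
  by rewrite expn0 mulr1 x_half in high.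
have ys_le : (L ^ s)%:R * y <= t by rewrite leNgt; apply/negP => /min0; rewrite ltnn.
have one_lt : 1 < 2 * L%:R * (L ^ s)%:R * x by rewrite -ltNge expnS natrM !mulrA in high.
have y_le : y <= y * (2 * L%:R * (L ^ s)%:R * x) by rewrite ler_peMr // ltW.
apply: le_trans y_le _.
have -> : y * (2 * L%:R * (L ^ s)%:R * x) = 2 * L%:R * x * ((L ^ s)%:R * y) by ring.
by rewrite [leRHS]mulrAC ler_wpM2l // !mulr_ge0.
Qed.

Section LowPayGroups.
Variables (R : realType) (I : finType) (a l : I -> R).
Hypotheses (a_ge0 : forall i, 0 <= a i) (l_ge0 : forall i, 0 <= l i).

Definition low_pay_group (K : {set I}) (k : nat) : Prop :=
  [/\ (0 < k)%N, (#|K| <= k)%N & forall i, i \in K -> 2 * k%:R * a i <= 1].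

Definition threshold_set (P : {set I}) (k : nat) (t : R) : {set I} :=
  [set i in P | (2 * k%:R * a i <= 1) && (t < k%:R * l i)].

Lemma low_pay_group0 : low_pay_group finset.set0 1.
Proof. by split; rewrite ?cards0 // => i; rewrite inE. Qed.

Lemma sum_threshold_set_lt (P : {set I}) (k : nat) (t : R) : (0 < k)%N ->
    (forall K : {set I}, K \subset P -> low_pay_group K k -> \sum_(i in K) l i < t) ->
  \sum_(i in threshold_set P k t) l i < t.
Proof.
(* Either the threshold set is itself a low-pay k-group, or any k of its
   members already have value more than k * (t / k) = t. *)
move=> k_gt0 small; set H := threshold_set P k t.
have HP : H \subset P by apply/subsetP => i; rewrite inE => /andP [].
have H_low i : i \in H -> 2 * k%:R * a i <= 1 by rewrite inE => /and3P [].
have [Hk | kH] := leqP #|H| k; first by apply: small => //; split.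
have [B BH cardB] := exists_subset_card (ltnW kH).
have : \sum_(i in B) l i < t.
  apply: small; first exact: subset_trans BH HP.
  by split; rewrite ?cardB // => i /(subsetP BH) /H_low.
apply: contraTT => _; rewrite -leNgt.
have k_neq0 : k%:R != 0 :> R by rewrite pnatr_eq0 -lt0n.
rewrite -[t](divfK k_neq0) mulr_natr -cardB -sumr_const.
apply: ler_sum => i /(subsetP BH); rewrite inE => /and3P [_ _ lt_i].
by rewrite cardB ler_pdivrMr ?ltr0n // mulrC ltW.
Qed.

Lemma le_sum_threshold_sets (P : {set I}) (L J : nat) (t : R) (i : I) :
    (0 < L)%N -> 0 <= t -> i \in P -> 2 * a i <= 1 ->
  l i <= t / (L ^ J)%:R
         + \sum_(s < J.+1) (if i \in threshold_set P (L ^ s) t then l i else 0)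
         + 2 * L%:R * t * a i.
Proof.
move=> L_gt0 t_ge0 iP a_half.
have LJ_gt0 : 0 < (L ^ J)%:R :> R by rewrite ltr0n expn_gt0 L_gt0.
have first_ge0 : 0 <= t / (L ^ J)%:R by rewrite divr_ge0 // ltW.
set sum := \sum_(s < J.+1) _.
have sum_ge0 : 0 <= sum by apply: sumr_ge0 => s _; case: ifP.
have last_ge0 : 0 <= 2 * L%:R * t * a i by rewrite !mulr_ge0.
case: (scale_trichotomy J t L_gt0 (a_ge0 i) a_half (l_ge0 i)) => [lJ_le | [s s_le Hs] | ?].
- suff : l i <= t / (L ^ J)%:R by lra.
  by rewrite ler_pdivlMr // mulrC.
- suff : l i <= sum by lra.
  rewrite /sum (bigD1 (Ordinal (s_le : s < J.+1)%N)) //= inE iP Hs lerDl.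
  by apply: sumr_ge0 => s' _; case: ifP.
- lra.
Qed.

Lemma exists_low_pay_group (P : {set I}) (L J : nat) :
    (0 < L)%N -> (#|P| <= L ^ J)%N -> \sum_(i in P) a i <= 1 ->
    (forall i, i \in P -> 2 * a i <= 1) ->
  exists (K : {set I}) (k : nat), [/\ K \subset P, low_pay_group K k &
    \sum_(i in P) l i <= (J + 2 * L + 2)%:R * \sum_(i in K) l i].
Proof.
move=> L_gt0 cardP sum_a a_half.
set D : R := (J + 2 * L + 2)%:R; set W := \sum_(i in P) l i.
have D_gt0 : 0 < D by rewrite ltr0n addn2.
(* Otherwise every low-pay group inside P has value below t := W / D, and
   summing le_sum_threshold_sets over P gives W < D t. *)
apply: contrapT => none; set t := W / D.
have small (K : {set I}) k : K \subset P -> low_pay_group K k -> \sum_(i in K) l i < t.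
  move=> KP Kk; rewrite ltr_pdivlMr // mulrC ltNge; apply/negP => W_le.
  by apply: none; exists K, k.
have t_gt0 : 0 < t.
  by have := small _ _ (finset.sub0set P) low_pay_group0; rewrite big_set0.
have W_le : W <= \sum_(i in P) (t / (L ^ J)%:R
    + \sum_(s < J.+1) (if i \in threshold_set P (L ^ s) t then l i else 0)
    + 2 * L%:R * t * a i).
  by apply: ler_sum => i iP; apply: le_sum_threshold_sets; rewrite ?a_half ?ltW.
rewrite !big_split /= in W_le.
have first_le : \sum_(i in P) t / (L ^ J)%:R <= t.
  rewrite sumr_const -[_ *+ #|P|]mulr_natr mulrAC.
  by rewrite ler_pdivrMr ?ltr0n ?expn_gt0 ?L_gt0 // ler_wpM2l ?ler_nat // ltW.
have middle_lt : \sum_(i in P) \sum_(s < J.+1)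
    (if i \in threshold_set P (L ^ s) t then l i else 0) < t *+ J.+1.
  have sum_t : \sum_(s < J.+1) t = t *+ J.+1 by rewrite sumr_const card_ord.
  rewrite exchange_big -sum_t.
  apply: ltr_sum => [|s _]; first by apply/hasP; exists ord0; rewrite ?mem_index_enum.
  rewrite -big_mkcondr (eq_bigl (mem (threshold_set P (L ^ s) t))) => [|i].
    by apply: sum_threshold_set_lt; rewrite ?expn_gt0 ?L_gt0 // => K; apply: small.
  by rewrite /= andb_idl // inE => /andP [].
have last_le : \sum_(i in P) 2 * L%:R * t * a i <= 2 * L%:R * t.
  rewrite -mulr_sumr -[leRHS]mulr1; apply: ler_wpM2l sum_a.
  by apply: mulr_ge0 (ltW t_gt0); rewrite mulr_ge0.
have W_eq : W = t * D by rewrite /t divfK // lt0r_neq0.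
have D_eq : D = J%:R + 2 * L%:R + 2 by rewrite /D !natrD; ring.
rewrite D_eq in W_eq.
rewrite mulrSr -mulr_natr in middle_lt.
lra.
Qed.

End LowPayGroups.

Lemma scale_count_bound (R : realType) (u : R) (L J : nat) :
    10 < u -> u <= L%:R <= u ^+ 2 -> (J%:R - 1) * ln (L%:R : R) <= u ^+ 4 ->
  (J + 2 * L + 2)%:R * (ln (u ^+ 4) / u ^+ 4) <= 5.
Proof.
move=> u_gt10 /andP [u_le_L L_le_u2] J_le.
have u_gt0 : 0 < u by lra.
have lu_gt0 : 0 < ln u by apply: ln_gt0; lra.
have lu_lt_u : ln u < u by exact: ln_sublinear.
have lu_le : ln u <= ln (L%:R : R) by rewrite ler_ln ?posrE //; lra.
have J_lu : J%:R * ln u <= u ^+ 4 + ln u.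
  have [-> | J_gt0] := posnP J.
    by rewrite mul0r; have := exprn_ge0 4 (ltW u_gt0); lra.
  have : (J%:R - 1) * ln u <= (J%:R - 1) * ln (L%:R : R).
    by rewrite ler_wpM2l // subr_ge0 ler1n.
  lra.
have L_lu : L%:R * ln u <= u ^+ 3 by rewrite exprSr ler_pM // ltW.
have u2_ge : 100 <= u ^+ 2 by rewrite expr2; nra.
have u3_ge : 100 * u <= u ^+ 3 by rewrite exprSr ler_wpM2r // ltW.
have u4_ge : 10 * u ^+ 3 <= u ^+ 4.
  by rewrite [u ^+ 4]exprSr mulrC ler_wpM2l ?exprn_ge0 ?ltW.
have u4_gt0 : 0 < u ^+ 4 by rewrite exprn_gt0.
rewrite lnXn // -mulr_natr mulrA ler_pdivrMr // !natrD.
lra.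
Qed.

Lemma exists_scales (R : realType) : exists N : nat, forall n : nat, (N <= n)%N ->
  exists L J : nat, [/\ (0 < L)%N, (n <= L ^ J)%N,
    0 < ln (ln (n%:R : R)) / ln (n%:R : R) &
    (J + 2 * L + 2)%:R * (ln (ln (n%:R : R)) / ln (n%:R : R)) <= 5].
Proof.
exists (Num.trunc (sequences.expR (10 ^+ 4 : R))).+1 => n n_ge.
have n_big : sequences.expR (10 ^+ 4) < n%:R :> R.
  by apply: lt_le_trans (truncnS_gt _) _; rewrite ler_nat.
have n_gt0 : 0 < n%:R :> R := lt_trans (expR_gt0 _) n_big.
set x := ln (n%:R : R).
have x_big : 10 ^+ 4 < x by rewrite -[X in X < _]expRK ltr_ln ?posrE ?expR_gt0.
have x_ge0 : 0 <= x by apply: le_trans (ltW x_big); rewrite exprn_ge0.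
set u := Num.sqrt (Num.sqrt x).
have x_eq : x = u ^+ 4.
  by rewrite (_ : 4 = 2 * 2)%N // exprM !sqr_sqrtr ?sqrtr_ge0.
have u_gt10 : 10 < u.
  by rewrite -(ltr_pXn2r (_ : 0 < 4)%N) ?nnegrE ?sqrtr_ge0 // -x_eq.
set L := Num.trunc (u ^+ 2).
have /andP [L_le L_gt] : L%:R <= u ^+ 2 < L.+1%:R.
  by apply: trunc_itv; rewrite exprn_ge0 // sqrtr_ge0.
have u_le_L : u <= L%:R.
  have : 10 * u <= u ^+ 2 by rewrite expr2; apply: ler_wpM2r; lra.
  by rewrite -natr1 in L_gt; lra.
have L_gt0 : (0 < L)%N by rewrite -(ltr0n R); lra.
have lnL_gt0 : 0 < ln (L%:R : R) by apply: ln_gt0; lra.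
set J := (Num.trunc (x / ln (L%:R : R))).+1.
have /andP [J_le J_gt] : J.-1%:R <= x / ln (L%:R : R) < J%:R.
  by apply: trunc_itv; rewrite divr_ge0 // ltW.
exists L, J; split => //.
- have : x < ln ((L ^ J)%:R : R).
    by rewrite natrX lnXn ?ltr0n // -[_ *+ J]mulr_natl -ltr_pdivrMr.
  have n_pos : (0 < n)%N by rewrite -(ltr0n R).
  by rewrite /x ltr_ln ?posrE ?ltr0n ?expn_gt0 ?L_gt0 // ltr_nat => /ltnW.
- by apply: divr_gt0; [apply: ln_gt0 |]; lra.
rewrite x_eq; apply: scale_count_bound => //; first by apply/andP.
by rewrite -x_eq -ler_pdivlMr // -natr1 addrK.
Qed.

Lemma deviationI (T : finType) (S S' B : {set T}) :
  S' \subset B -> (S :\: B :|: S') :&: B = S'.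
Proof.
move=> S'B; apply/setP => j; rewrite !inE.
case: (boolP (j \in S')) => [/(subsetP S'B) -> | _].
  by rewrite orbT.
by case: (j \in B); rewrite ?orbF ?andbF.
Qed.

Lemma deviationD (T : finType) (S S' B : {set T}) :
  S' \subset B -> (S :\: B :|: S') :\: B = S :\: B.
Proof.
move=> S'B; apply/setP => j; rewrite !inE.
case: (boolP (j \in S')) => [/(subsetP S'B) -> | _].
  by rewrite orbT.
by case: (j \in B); rewrite ?orbF ?andbF.
Qed.

Section EqualPayContracts.
Variables (R : realType) (n : nat) (T : finType) (own : T -> 'I_n).
Variables (c : T -> R) (f : {set T} -> R).
Hypothesis c_ge0 : forall j, 0 <= c j.

Definition group_actions (K : {set 'I_n}) : {set T} := [set j | own j \in K].

Definition eq_contract (K : {set 'I_n}) (b : R) : 'I_n -> R :=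
  fun i => if i \in K then b else 0.

Lemma eq_contract_is_contract K b : 0 <= b <= 1 -> is_contract (eq_contract K b).
Proof. by move=> b01 i; rewrite /eq_contract; case: ifP; rewrite ?lexx ?ler01. Qed.

Lemma eq_contract_equal_pay K b : equal_pay (eq_contract K b).
Proof. by move=> i k; rewrite /eq_contract; do 2 case: ifP; rewrite ?eqxx. Qed.

Lemma principal_util_eq_contract K b S :
  principal_util f (eq_contract K b) S = (1 - #|K|%:R * b) * f S.
Proof. by rewrite /principal_util /eq_contract -big_mkcond sumr_const mulr_natl. Qed.

Lemma cost_ge0 (S : {set T}) : 0 <= cost c S.
Proof. exact: sumr_ge0. Qed.

Lemma cost_setID (S B : {set T}) : cost c S = cost c (S :&: B) + cost c (S :\: B).
Proof. exact: big_setID. Qed.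

Lemma group_actions1 i : group_actions [set i] = actions_of own i.
Proof. by apply/setP => j; rewrite !inE. Qed.

Lemma sum_actions_of (g : T -> R) (S : {set T}) (K : {set 'I_n}) :
  \sum_(i in K) \sum_(j in S :&: actions_of own i) g j
    = \sum_(j in S :&: group_actions K) g j.
Proof.
rewrite [RHS](partition_big own (mem K)) => [|j]; last by rewrite !inE => /andP [].
apply: eq_bigr => i iK; apply: eq_bigl => j; rewrite !inE.
by case: (own j =P i) => [->|_]; rewrite ?iK ?andbT ?andbF.
Qed.

Definition potential_max (K : {set 'I_n}) (b : R) (S : {set T}) : Prop :=
  S \subset group_actions K /\
  forall X : {set T}, X \subset group_actions K -> b * f X - cost c X <= b * f S - cost c S.

Lemma exists_potential_max (K : {set 'I_n}) (b : R) : exists S, potential_max K b S.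
Proof.
have [S SK Smax] := @arg_maxP _ _ _ finset.set0 (fun S => S \subset group_actions K)
  (fun S => b * f S - cost c S) (finset.sub0set _).
by exists S; split.
Qed.

(* b f - c is an exact potential for eq_contract K b: the utility of a member of
   K differs from it by the cost of the other agents' actions. *)
Lemma potential_max_pure_NE (K : {set 'I_n}) (b : R) (S : {set T}) :
  potential_max K b S -> pure_NE own c f (eq_contract K b) S.
Proof.
move=> [SK Smax] i S' S'i; rewrite /agent_util /eq_contract deviationI //.
have [iK | iNK] := boolP (i \in K).
  have devK : S :\: actions_of own i :|: S' \subset group_actions K.
    rewrite finset.subUset (subset_trans (subsetDl _ _) SK) /=.
    by apply/subsetP => j /(subsetP S'i); rewrite !inE => /eqP ->.
  have := Smax _ devK.
  rewrite (cost_setID (S :\: _ :|: S') (actions_of own i)).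
  rewrite (cost_setID S (actions_of own i)).
  rewrite deviationI // deviationD //; lra.
have -> : S :&: actions_of own i = finset.set0.
  apply/setP => j; rewrite !inE; apply/negbTE/andP => [[/(subsetP SK)]].
  by rewrite inE => jK /eqP ji; rewrite -ji jK in iNK.
by rewrite !mul0r !sub0r /cost big_set0 oppr0 oppr_le0 cost_ge0.
Qed.

Section Approximation.
Hypotheses (f_ge0 : forall S, 0 <= f S)
  (f_mono : forall S S' : {set T}, S \subset S' -> f S <= f S').
Variables (astar : 'I_n -> R) (Sstar : {set T}) (w : T -> R).
Hypotheses (astar_contract : is_contract astar)
  (Sstar_NE : pure_NE own c f astar Sstar).
Hypotheses (w_ge0 : forall j, 0 <= w j) (w_le_f : forall S, additive_fn w S <= f S)
  (w_Sstar : additive_fn w Sstar = f Sstar).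

Definition contrib (i : 'I_n) : R := additive_fn w (Sstar :&: actions_of own i).

Lemma contrib_ge0 i : 0 <= contrib i.
Proof. exact: sumr_ge0. Qed.

Lemma sum_contrib (K : {set 'I_n}) :
  \sum_(i in K) contrib i = additive_fn w (Sstar :&: group_actions K).
Proof. exact: sum_actions_of. Qed.

Lemma sum_contrib_all : \sum_i contrib i = f Sstar.
Proof.
rewrite -w_Sstar -[Sstar in RHS]finset.setIT.
rewrite (eq_bigl (fun i => i \in [set: 'I_n])) => [|i]; last by rewrite finset.in_setT.
by rewrite sum_contrib; congr (additive_fn _ (_ :&: _)); apply/setP => j; rewrite !inE.
Qed.

Lemma cost_le_contrib i : cost c (Sstar :&: actions_of own i) <= astar i * contrib i.
Proof.
have := Sstar_NE (finset.sub0set (actions_of own i)).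
rewrite /agent_util deviationI ?finset.sub0set // finset.setU0 /cost big_set0 subr0.
have wD : f Sstar - contrib i <= f (Sstar :\: actions_of own i).
  apply: le_trans (w_le_f _); rewrite -w_Sstar /contrib /additive_fn.
  by rewrite (big_setID (actions_of own i)) /= addrC addrK.
have /andP [a_ge0 _] := astar_contract i.
have := ler_wpM2l a_ge0 wD; lra.
Qed.

Lemma low_pay_rate01 (k : nat) : (0 < k)%N -> 0 <= (3 / (4 * k%:R) : R) <= 1.
Proof.
move=> k_gt0; have k_ge1 : 1 <= k%:R :> R by rewrite ler1n.
by rewrite divr_ge0 //= ?ler_pdivrMr ?mulr_ge0 //; lra.
Qed.

Lemma low_pay_group_NE (K : {set 'I_n}) (k : nat) :
    low_pay_group astar K k ->
  exists S, pure_NE own c f (eq_contract K (3 / (4 * k%:R))) S /\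
    \sum_(i in K) contrib i <= 12 * principal_util f (eq_contract K (3 / (4 * k%:R))) S.
Proof.
(* b exceeds the cost rate 1/(2k) of the group by b/3, while #|K| b <= 3/4. *)
move=> [k_gt0 Kk Ka]; set b := 3 / (4 * k%:R).
have k_ge1 : 1 <= k%:R :> R by rewrite ler1n.
have /andP [b_ge0 _] : 0 <= b <= 1 := low_pay_rate01 k_gt0.
have [S [SK Smax]] := exists_potential_max K b.
exists S; split; first exact: potential_max_pure_NE.
rewrite principal_util_eq_contract.
set X := Sstar :&: group_actions K; set W := \sum_(i in K) contrib i.
have W_le : W <= f X by rewrite /W sum_contrib.
have cost_le : cost c X <= W / (2 * k%:R).
  rewrite /X /cost -sum_actions_of mulr_suml; apply: ler_sum => i iK.
  apply: le_trans (cost_le_contrib i) _.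
  rewrite ler_pdivlMr; last by lra.
  have := ler_wpM2r (contrib_ge0 i) (Ka i iK); lra.
have pot := Smax X (finset.subsetIr _ _).
have fS_ge0 := f_ge0 S; have cS_ge0 := cost_ge0 S.
have k_neq0 : k%:R != 0 :> R by rewrite pnatr_eq0 -lt0n.
have W_le3 : W <= 3 * f S.
  have k4_gt0 : 0 < 4 * k%:R :> R by lra.
  rewrite -(@ler_pM2r _ (4 * k%:R)^-1) ?invr_gt0 //.
  have -> : W / (4 * k%:R) = b * W - W / (2 * k%:R) by rewrite /b; field.
  have -> : 3 * f S / (4 * k%:R) = b * f S by rewrite /b; field.
  have := ler_wpM2l b_ge0 W_le; lra.
have Kb : #|K|%:R * b <= 3 / 4.
  have -> : 3 / 4 = k%:R * b by rewrite /b; field.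
  by rewrite ler_wpM2r // ler_nat.
suff : 1 / 4 * f S <= (1 - #|K|%:R * b) * f S by lra.
by rewrite ler_wpM2r //; lra.
Qed.

Lemma single_agent_NE (i : 'I_n) :
  exists S, pure_NE own c f (eq_contract [set i] ((1 + astar i) / 2)) S /\
    (1 - astar i) * contrib i - 2 * astar i * (f Sstar - contrib i)
      <= 2 * principal_util f (eq_contract [set i] ((1 + astar i) / 2)) S.
Proof.
(* Compare the maximality of S against S* :&: T_i with the equilibrium condition
   of agent i in S* against deviating to S; f S <= f (S* :\: T_i :|: S). *)
set b := (1 + astar i) / 2; have /andP [a_ge0 _] := astar_contract i.
have [S [Si Smax]] := exists_potential_max [set i] b.
exists S; split; first exact: potential_max_pure_NE.
rewrite principal_util_eq_contract finset.cards1 mul1r.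
rewrite group_actions1 in Si Smax.
have NE_i := Sstar_NE Si; rewrite /agent_util deviationI // in NE_i.
have pot := Smax _ (finset.subsetIr Sstar (actions_of own i)).
have f_dev := f_mono (finset.subsetUr (Sstar :\: actions_of own i) S).
have := ler_wpM2l a_ge0 f_dev.
have b_ge0 : 0 <= b by rewrite /b; lra.
have := ler_wpM2l b_ge0 (w_le_f (Sstar :&: actions_of own i)).
rewrite /b /contrib in pot NE_i *; lra.
Qed.

Definition equal_pay_approx (r : R) : Prop :=
  exists a S, [/\ is_contract a, equal_pay a, pure_NE own c f a S,
    0 <= principal_util f a S &
    principal_util f astar Sstar <= r * principal_util f a S].

Lemma eq_contract_approx (K : {set 'I_n}) (b r : R) (S : {set T}) :
    0 <= b <= 1 -> pure_NE own c f (eq_contract K b) S ->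
    0 <= principal_util f (eq_contract K b) S ->
    principal_util f astar Sstar <= r * principal_util f (eq_contract K b) S ->
  equal_pay_approx r.
Proof.
move=> b01 S_NE P_ge0 P_le; exists (eq_contract K b), S; split => //.
  exact: eq_contract_is_contract.
exact: eq_contract_equal_pay.
Qed.

Definition low_paid : {set 'I_n} := [set i | 2 * astar i <= 1].

Lemma equal_pay_approx_low_paid (L J : nat) :
    (0 < L)%N -> (n <= L ^ J)%N -> \sum_i astar i <= 1 ->
    principal_util f astar Sstar <= 4 * \sum_(i in low_paid) contrib i ->
  equal_pay_approx (48 * (J + 2 * L + 2)%:R).
Proof.
move=> L_gt0 nLJ A_le1 low_heavy.
have a_ge0 i : 0 <= astar i by case/andP: (astar_contract i).
have card_low : (#|low_paid| <= L ^ J)%N.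
  by apply: leq_trans nLJ; rewrite -[X in (_ <= X)%N]card_ord max_card.
have sum_low : \sum_(i in low_paid) astar i <= 1.
  apply: le_trans A_le1; rewrite [X in _ <= X](bigID (mem low_paid)) /= lerDl.
  exact: sumr_ge0.
have half_low i : i \in low_paid -> 2 * astar i <= 1 by rewrite inE.
have [K [k [_ Kk W_le]]] :=
  exists_low_pay_group a_ge0 contrib_ge0 L_gt0 card_low sum_low half_low.
have [S [S_NE WK]] := low_pay_group_NE Kk; have [k_gt0 _ _] := Kk.
have WK_ge0 : 0 <= \sum_(i in K) contrib i by apply: sumr_ge0 => i _; exact: contrib_ge0.
apply: eq_contract_approx (low_pay_rate01 k_gt0) S_NE _ _; first lra.
have := ler_wpM2l (ler0n R (J + 2 * L + 2)) WK; lra.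
Qed.

Lemma equal_pay_approx_dominant : \sum_i astar i <= 1 ->
    4 * \sum_(i in low_paid) contrib i < principal_util f astar Sstar ->
  equal_pay_approx 8.
Proof.
rewrite /principal_util; set A := \sum_i astar i; set W := \sum_(i in low_paid) _.
move=> A_le1 light.
have a_ge0 i : 0 <= astar i by case/andP: (astar_contract i).
have A_ge0 : 0 <= A by exact: sumr_ge0.
have W_ge0 : 0 <= W by apply: sumr_ge0 => i _; exact: contrib_ge0.
have [i0 high] : exists i0, 1 < 2 * astar i0.
  apply: contrapT => none.
  have W_all : W = f Sstar.
    rewrite -sum_contrib_all; apply: eq_bigl => i; rewrite inE leNgt.
    by apply/negP => ?; apply: none; exists i.
  have := mulr_ge0 A_ge0 (f_ge0 Sstar); lra.
(* As a*_i0 > 1/2 and the pays sum to at most 1, low_paid = [set~ i0]. *)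
have F_eq : f Sstar = W + contrib i0.
  rewrite -sum_contrib_all (bigD1 i0) //= addrC; congr (_ + _); apply: eq_bigl => i.
  rewrite inE; have [-> | ne] := eqVneq i i0; first by rewrite leNgt high.
  have : astar i <= \sum_(j | j != i0) astar j by rewrite (bigD1 i) //= lerDl sumr_ge0.
  by rewrite /A (bigD1 i0) /= in A_le1; lra.
have [S [S_NE P_ge]] := single_agent_NE i0.
have /andP [a_i0_ge0 a_i0_le1] := astar_contract i0.
have a_le_A : astar i0 <= A by rewrite /A (bigD1 i0) //= lerDl sumr_ge0.
have b01 : 0 <= (1 + astar i0) / 2 <= 1 by apply/andP; split; lra.
rewrite F_eq addrK in P_ge; rewrite F_eq in light.
(* 2 P >= (1 - A) l_i0 - 2 W >= (1 - A) (W + l_i0) / 4 since 4 W < (1 - A) (W + l_i0). *)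
have h1 : (1 - A) * contrib i0 <= (1 - astar i0) * contrib i0.
  by rewrite ler_wpM2r ?contrib_ge0 //; lra.
have h2 := ler_wpM2r W_ge0 a_i0_le1; have h3 := mulr_ge0 A_ge0 W_ge0.
apply: eq_contract_approx b01 S_NE _ _; first lra.
rewrite [principal_util _ astar _]/principal_util -/A F_eq; lra.
Qed.

Lemma equal_pay_approx_le (r r' : R) : r <= r' ->
  equal_pay_approx r -> equal_pay_approx r'.
Proof.
move=> r_le [a [S [a_contract a_eq S_NE P_ge0 P_le]]]; exists a, S; split => //.
exact: le_trans P_le (ler_wpM2r P_ge0 r_le).
Qed.

Lemma equal_pay_approx_nonpos (r : R) : 0 <= r ->
  principal_util f astar Sstar <= 0 -> equal_pay_approx r.
Proof.
move=> r_ge0 P_le0; have [S /potential_max_pure_NE S_NE] :=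
  exists_potential_max finset.set0 0.
have b01 : 0 <= (0 : R) <= 1 by rewrite lexx ler01.
have P_eq : principal_util f (eq_contract (finset.set0 : {set 'I_n}) 0) S = f S.
  by rewrite principal_util_eq_contract mulr0 subr0 mul1r.
apply: eq_contract_approx b01 S_NE _ _; rewrite P_eq //.
exact: le_trans P_le0 (mulr_ge0 r_ge0 (f_ge0 S)).
Qed.

Lemma exists_equal_pay_approx (L J : nat) : (0 < L)%N -> (n <= L ^ J)%N ->
  equal_pay_approx (48 * (J + 2 * L + 2)%:R).
Proof.
move=> L_gt0 nLJ; set D : R := (J + 2 * L + 2)%:R.
have D_ge1 : 1 <= D by rewrite ler1n addn2.
have [P_le0 | P_gt0] := lerP (principal_util f astar Sstar) 0.
  by apply: equal_pay_approx_nonpos; lra.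
have A_le1 : \sum_i astar i <= 1.
  move: P_gt0; rewrite /principal_util; apply: contraTT; rewrite -!ltNge => A_gt1.
  by rewrite -leNgt mulr_le0_ge0 // ?f_ge0; lra.
set W := \sum_(i in low_paid) contrib i.
have [heavy | light] := lerP (principal_util f astar Sstar) (4 * W).
  exact: equal_pay_approx_low_paid.
by apply: equal_pay_approx_le (equal_pay_approx_dominant A_le1 light); lra.
Qed.

End Approximation.

End EqualPayContracts.

Theorem theorem5p3 (R : realType) :
  exists2 C : R, 0 < C &
  exists N : nat, forall (n : nat), (N <= n)%N ->
  forall (T : finType) (own : T -> 'I_n) (c : T -> R) (f : {set T} -> R),
    (forall j, 0 <= c j) ->
    valid_reward f ->
  forall (astar : 'I_n -> R) (Sstar : {set T}),
    is_contract astar -> pure_NE own c f astar Sstar ->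
  exists (a : 'I_n -> R) (S : {set T}),
    [/\ is_contract a, equal_pay a, pure_NE own c f a S &
        principal_util f a S >=
          C * (ln (ln (n%:R)) / ln (n%:R)) * principal_util f astar Sstar].
Proof.
have [N scales] := exists_scales R.
exists (1 / 240); first by rewrite divr_gt0.
exists N => n n_ge T own c f c_ge0 [_ f01 f_mono [ws [_ ws_ge0 ws_le ws_eq]]].
move=> astar Sstar astar_contract Sstar_NE.
have f_ge0 S : 0 <= f S by case/andP: (f01 S).
have [w w_ws w_Sstar] := ws_eq Sstar.
have [L [J [L_gt0 nLJ rho_gt0 D_rho]]] := scales n n_ge.
have [a [S [a_contract a_eq S_NE P_ge0 P_le]]] :=
  exists_equal_pay_approx c_ge0 f_ge0 f_mono astar_contract Sstar_NE
    (ws_ge0 w w_ws) (ws_le w w_ws) w_Sstar L_gt0 nLJ.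
exists a, S; split => //.
have := ler_wpM2l (ltW rho_gt0) P_le; have := ler_wpM2r P_ge0 D_rho; lra.
Qed.
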